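(* Let $p$ be a positive integer, $L,E,\sigma>0$ with $L,E\in 2^{-p}\mathbb{Z}$, and $\epsilon>0$ with $\sigma\ge L/\epsilon$. Then the truncated cumulative Laplace mechanism $\mathcal{M}^{(\mathtt{CLap})}_{L,E,\sigma,p}:\mathcal{A}_{p,E}\to\mathcal{B}_{p,L+E}$ is $\epsilon$-differentially private in the sense that for all $x_1,x_2\in\mathcal{A}_{p,E}$ and all $y\in\mathcal{B}_{p,L+E}$, $f^{(\mathtt{CLap})}_{x_1,\sigma}(y)\le e^{\epsilon}f^{(\mathtt{CLap})}_{x_2,\sigma}(y)$.
   Context: For $p\in\mathbb{Z}_{>0}$ and $B>0$, $2^{-p}\mathbb{Z}=\{a/2^p: a\in\mathbb{Z}\}$, $\mathcal{A}_{p,B}:=[-B,B]\cap 2^{-p}\mathbb{Z}$ and $\mathcal{B}_{p,B}:=\mathcal{A}_{p,B}\setminus\{B\}$. The truncated cumulative Laplace mechanism $\mathcal{M}^{(\mathtt{CLap})}_{L,E,\sigma,p}$ with parameters $L,E,\sigma>0$ maps $x\in\mathcal{A}_{p,E}$ to $y\in\mathcal{B}_{p,L+E}$ with probability $f^{(\mathtt{CLap})}_{x,\sigma}(y)=\frac{1}{\lambda^{(\mathtt{CLap})}_{L,E,\sigma}}\int_y^{y+2^{-p}}e^{-\min(|r-x|,L)/\sigma}dr$, where $\lambda^{(\mathtt{CLap})}_{L,E,\sigma}=\sum_{y\in\mathcal{B}_{p,L+E}}\int_y^{y+2^{-p}}e^{-\min(|r-x|,L)/\sigma}dr$ is the normalizing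 constant (independent of $x$). *)

From Stdlib Require Import Reals Lra Lia ZArith List.
From Coquelicot Require Import Coquelicot.
Open Scope R_scope.

Definition mesh (p : nat) : R := / (2 ^ p).

Definition in_grid (p : nat) (y : R) : Prop :=
  exists a : Z, y = IZR a * mesh p.

Definition in_A (p : nat) (B y : R) : Prop :=
  in_grid p y /\ -B <= y <= B.

Definition in_B (p : nat) (B y : R) : Prop :=
  in_A p B y /\ y <> B.

Definition in_Bb (p : nat) (B : R) (a : Z) : bool :=
  let y := IZR a * mesh p in
  if Rle_dec (- B) y then
    if Rle_dec y B then
      if Req_EM_T y B then false else true
    else false
  else false.

(* A finite range of integers containing every a with a*2^{-p} in [-B,B]
   (when B > 0): all a with |a| <= M, M = |up(B * 2^p)|. *)
Definition grid_range (p : nat) (B : R) : list Z :=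
  let M := Z.abs (up (B * 2 ^ p)) in
  map (fun n : nat => (Z.of_nat n - M)%Z) (seq 0 (Z.to_nat (2 * M + 1))).

Definition clap_kernel (L sigma x r : R) : R :=
  exp (- Rmin (Rabs (r - x)) L / sigma).

Definition cell_mass (p : nat) (L sigma x y : R) : R :=
  RInt (clap_kernel L sigma x) y (y + mesh p).

Definition lambda_clap (p : nat) (L E sigma x : R) : R :=
  fold_right Rplus 0
    (map (fun a : Z => cell_mass p L sigma x (IZR a * mesh p))
         (filter (in_Bb p (L + E)) (grid_range p (L + E)))).

Definition f_clap (p : nat) (L E sigma x y : R) : R :=
  cell_mass p L sigma x y / lambda_clap p L E sigma x.

(* The kernel takes values in [exp(-L/sigma), 1], so under any input the mass
   of a cell of width 2^-p lies between exp(-L/sigma) 2^-p and 2^-p, and two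
   inputs change it by a factor at most exp(L/sigma) <= exp(eps).  The
   normalizing constant is the same for every input: the cells of B_{p,L+E}
   tile [-(L+E), L+E], on which the kernel equals exp(-L/sigma) outside the
   window [x-L, x+L] (contained in it because |x| <= E), while the integral
   over the window does not depend on x by translation invariance. *)
From Stdlib Require Import Reals Lra Lia ZArith List.
From Coquelicot Require Import Coquelicot.
Open Scope R_scope.

Lemma mesh_pos p : 0 < mesh p.
Proof. apply Rinv_0_lt_compat, pow_lt; lra. Qed.

Lemma exp_le_exp a b : a <= b -> exp a <= exp b.
Proof.
  intros [Hlt | ->]; [left; apply exp_increasing, Hlt | right; reflexivity].
Qed.

Lemma RInt_const_R (a b c : R) : RInt (fun _ => c) a b = (b - a) * c.
Proof. now rewrite RInt_const. Qed.

Lemma clap_kernel_continuous L s x r : continuous (clap_kernel L s x) r.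
Proof.
  assert (Hmin : forall a b, Rmin a b = (a + b - Rabs (a - b)) / 2).
  { intros a b; unfold Rmin; destruct Rle_dec.
    - rewrite Rabs_left1; lra.
    - rewrite Rabs_right; lra. }
  apply continuous_ext with
    (fun r => exp (- ((Rabs (r - x) + L - Rabs (Rabs (r - x) - L)) / 2) / s)).
  { intros t; unfold clap_kernel; now rewrite Hmin. }
  apply continuous_exp_comp.
  apply (continuous_mult (fun r => - ((Rabs (r - x) + L - Rabs (Rabs (r - x) - L)) / 2))
           (fun _ => / s)); [|apply continuous_const].
  apply (continuous_opp (fun r => (Rabs (r - x) + L - Rabs (Rabs (r - x) - L)) / 2)).
  apply (continuous_mult (fun r => Rabs (r - x) + L - Rabs (Rabs (r - x) - L))
           (fun _ => / 2)); [|apply continuous_const].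
  assert (Hdist : continuous (fun r => Rabs (r - x)) r).
  { apply continuous_Rabs_comp, (continuous_minus (fun r => r) (fun _ => x)).
    - apply continuous_id.
    - apply continuous_const. }
  apply (continuous_minus (fun r => Rabs (r - x) + L) (fun r => Rabs (Rabs (r - x) - L))).
  - apply (continuous_plus (fun r => Rabs (r - x)) (fun _ => L)); [exact Hdist|].
    apply continuous_const.
  - apply continuous_Rabs_comp, (continuous_minus (fun r => Rabs (r - x)) (fun _ => L)).
    + exact Hdist.
    + apply continuous_const.
Qed.

Lemma ex_RInt_clap_kernel L s x a b : ex_RInt (clap_kernel L s x) a b.
Proof.
  apply (@ex_RInt_continuous R_CompleteNormedModule).
  intros; apply clap_kernel_continuous.
Qed.

Lemma RInt_clap_kernel_Chasles L s x a b c :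
  RInt (clap_kernel L s x) a b + RInt (clap_kernel L s x) b c =
  RInt (clap_kernel L s x) a c.
Proof. apply (RInt_Chasles (V := R_CompleteNormedModule)); apply ex_RInt_clap_kernel. Qed.

Lemma clap_kernel_bounds L s x r : 0 <= L -> 0 < s ->
  exp (- L / s) <= clap_kernel L s x r <= 1.
Proof.
  intros HL Hs; unfold clap_kernel; rewrite <- exp_0.
  assert (Hlo : 0 <= Rmin (Rabs (r - x)) L) by (apply Rmin_glb; [apply Rabs_pos | lra]).
  assert (Hhi : Rmin (Rabs (r - x)) L <= L) by apply Rmin_r.
  split; apply exp_le_exp; unfold Rdiv.
  - apply Rmult_le_compat_r; [left; apply Rinv_0_lt_compat|]; lra.
  - rewrite <- Ropp_mult_distr_l, <- Ropp_0; apply Ropp_le_contravar.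
    apply Rmult_le_pos; [|left; apply Rinv_0_lt_compat]; lra.
Qed.

Lemma clap_kernel_far L s x r : L <= Rabs (r - x) -> clap_kernel L s x r = exp (- L / s).
Proof. intros H; unfold clap_kernel; now rewrite Rmin_right. Qed.

Lemma RInt_clap_kernel_bounds L s x a b : 0 <= L -> 0 < s -> a <= b ->
  exp (- L / s) * (b - a) <= RInt (clap_kernel L s x) a b <= b - a.
Proof.
  intros HL Hs Hab.
  split.
  - rewrite Rmult_comm, <- RInt_const_R.
    apply RInt_le; [exact Hab | apply ex_RInt_const | apply ex_RInt_clap_kernel |].
    intros r _; apply clap_kernel_bounds; assumption.
  - rewrite <- (Rmult_1_r (b - a)), <- RInt_const_R.
    apply RInt_le; [exact Hab | apply ex_RInt_clap_kernel | apply ex_RInt_const |].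
    intros r _; apply clap_kernel_bounds; assumption.
Qed.

Lemma RInt_clap_kernel_pos L s x a b : 0 <= L -> 0 < s -> a < b ->
  0 < RInt (clap_kernel L s x) a b.
Proof.
  intros HL Hs Hab.
  eapply Rlt_le_trans; [|apply RInt_clap_kernel_bounds; lra].
  apply Rmult_lt_0_compat; [apply exp_pos | lra].
Qed.

Lemma cell_mass_ratio p L s x1 x2 y : 0 <= L -> 0 < s ->
  cell_mass p L s x1 y <= exp (L / s) * cell_mass p L s x2 y.
Proof.
  intros HL Hs; unfold cell_mass.
  assert (Hw : y <= y + mesh p) by (pose proof (mesh_pos p); lra).
  destruct (RInt_clap_kernel_bounds L s x1 _ _ HL Hs Hw) as [_ Hup1].
  destruct (RInt_clap_kernel_bounds L s x2 _ _ HL Hs Hw) as [Hlo2 _].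
  apply Rle_trans with (exp (L / s) * (exp (- L / s) * (y + mesh p - y))).
  - rewrite <- Rmult_assoc, <- exp_plus.
    replace (L / s + - L / s) with 0 by (unfold Rdiv; ring).
    rewrite exp_0; lra.
  - apply Rmult_le_compat_l; [left; apply exp_pos | exact Hlo2].
Qed.

Lemma RInt_clap_kernel_shift L s x a b :
  RInt (clap_kernel L s x) (x + a) (x + b) = RInt (clap_kernel L s 0) a b.
Proof.
  transitivity (RInt (clap_kernel L s 0) (1 * (x + a) + - x) (1 * (x + b) + - x));
    [|f_equal; ring].
  rewrite <- (RInt_comp_lin (V := R_CompleteNormedModule) (clap_kernel L s 0) 1 (- x))
    by apply ex_RInt_clap_kernel.
  apply RInt_ext; intros r _.
  unfold scal; simpl; unfold mult; simpl.
  rewrite Rmult_1_l; unfold clap_kernel; do 5 f_equal; ring.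
Qed.

(* [:> R]: [RInt] lands in the carrier of a Coquelicot module, where [ring] does not apply. *)
Lemma RInt_clap_kernel_window L s x B : -B + L <= x <= B - L ->
  RInt (clap_kernel L s x) (- B) B =
  exp (- L / s) * (2 * B - 2 * L) + RInt (clap_kernel L s 0) (- L) L :> R.
Proof.
  intros Hx.
  rewrite <- (RInt_clap_kernel_Chasles L s x _ (x + - L)),
          <- (RInt_clap_kernel_Chasles L s x (x + - L) (x + L)),
          RInt_clap_kernel_shift.
  assert (Hleft : RInt (clap_kernel L s x) (- B) (x + - L) = (x + - L - - B) * exp (- L / s)).
  { rewrite <- RInt_const_R; apply RInt_ext; intros r.
    rewrite Rmin_left, Rmax_right by lra; intros Hr.
    apply clap_kernel_far; pose proof (Rabs_maj2 (r - x)); lra. }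
  assert (Hright : RInt (clap_kernel L s x) (x + L) B = (B - (x + L)) * exp (- L / s)).
  { rewrite <- RInt_const_R; apply RInt_ext; intros r.
    rewrite Rmin_left, Rmax_right by lra; intros Hr.
    apply clap_kernel_far; pose proof (RRle_abs (r - x)); lra. }
  rewrite Hleft, Hright; ring.
Qed.

Lemma sum_RInt_cells (g : R -> R) a h start len :
  (forall u v, ex_RInt g u v) ->
  fold_right Rplus 0
    (map (fun n : nat => RInt g (a + INR n * h) (a + INR n * h + h)) (seq start len)) =
  RInt g (a + INR start * h) (a + INR (start + len) * h).
Proof.
  intros Hg; revert start; induction len as [|len IH]; intros start; simpl.
  - now rewrite Nat.add_0_r, RInt_point.
  - rewrite IH, <- Nat.add_succ_comm, S_INR.
    replace (a + (INR start + 1) * h) with (a + INR start * h + h) by ring.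
    apply (RInt_Chasles (V := R_CompleteNormedModule)); apply Hg.
Qed.

Lemma in_Bb_scaled p N a :
  in_Bb p (IZR N * mesh p) a = ((- N <=? a)%Z && (a <? N)%Z)%bool.
Proof.
  pose proof (mesh_pos p) as Hm.
  unfold in_Bb.
  destruct (Z.leb_spec (- N) a) as [Hlo|Hlo]; apply IZR_le in Hlo || apply IZR_lt in Hlo;
    rewrite opp_IZR in Hlo;
    destruct (Z.ltb_spec a N) as [Hhi|Hhi]; apply IZR_lt in Hhi || apply IZR_le in Hhi;
    repeat destruct Rle_dec; try destruct Req_EM_T; simpl; try reflexivity; nra.
Qed.

Lemma grid_range_scaled p N : (0 <= N)%Z ->
  grid_range p (IZR N * mesh p) =
  map (fun n : nat => (Z.of_nat n - (N + 1))%Z) (seq 0 (1 + 2 * Z.to_nat N + 2)).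
Proof.
  intros HN; unfold grid_range.
  replace (IZR N * mesh p * 2 ^ p) with (IZR N)
    by (unfold mesh; field; apply pow_nonzero; lra).
  rewrite <- (up_tech (IZR N) N); [| lra | apply IZR_lt; lia].
  rewrite Z.abs_eq by lia; do 2 f_equal; lia.
Qed.

Lemma filter_in_Bb_grid_range p N : (0 <= N)%Z ->
  filter (in_Bb p (IZR N * mesh p)) (grid_range p (IZR N * mesh p)) =
  map (fun n : nat => (Z.of_nat n - (N + 1))%Z) (seq 1 (2 * Z.to_nat N)).
Proof.
  intros HN; rewrite grid_range_scaled by exact HN.
  rewrite !seq_app, !map_app, !filter_app.
  erewrite (filter_ext_in _ (fun _ => false) (map _ (seq 0 1))),
           (filter_ext_in _ (fun _ => true) (map _ (seq (0 + 1) _))),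
           (filter_ext_in _ (fun _ => false) (map _ (seq _ 2%nat))),
           !filter_false, List.filter_true, app_nil_r; [reflexivity | ..];
    intros a Ha; apply in_map_iff in Ha; destruct Ha as [n [<- Hn]];
    apply in_seq in Hn; rewrite in_Bb_scaled;
    [apply Bool.andb_false_iff | apply Bool.andb_true_iff | apply Bool.andb_false_iff];
    rewrite ?Z.leb_le, ?Z.ltb_lt, ?Z.leb_gt, ?Z.ltb_ge; lia.
Qed.

Lemma in_grid_add p u v : in_grid p u -> in_grid p v -> in_grid p (u + v).
Proof. intros [a ->] [b ->]; exists (a + b)%Z; rewrite plus_IZR; ring. Qed.

Lemma lambda_clap_RInt p L E s x : in_grid p (L + E) -> 0 <= L + E ->
  lambda_clap p L E s x = RInt (clap_kernel L s x) (- (L + E)) (L + E).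
Proof.
  intros [N HB] HBpos; pose proof (mesh_pos p) as Hm.
  assert (HN : (0 <= N)%Z)
    by (apply le_IZR, Rmult_le_reg_r with (mesh p); lra).
  unfold lambda_clap; rewrite HB, filter_in_Bb_grid_range by exact HN.
  set (a := - IZR (N + 1) * mesh p).
  rewrite map_map,
    (map_ext _ (fun n : nat => RInt (clap_kernel L s x) (a + INR n * mesh p)
                                  (a + INR n * mesh p + mesh p))).
  2:{ intros n; unfold cell_mass, a; rewrite minus_IZR, <- INR_IZR_INZ; f_equal; ring. }
  rewrite sum_RInt_cells by apply ex_RInt_clap_kernel.
  assert (Hlen : INR (1 + 2 * Z.to_nat N) = 1 + 2 * IZR N).
  { rewrite plus_INR, mult_INR, (INR_IZR_INZ (Z.to_nat N)), Z2Nat.id by exact HN.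
    simpl; ring. }
  unfold a; rewrite Hlen, plus_IZR; simpl; f_equal; ring.
Qed.

Lemma lambda_clap_indep p L E s x1 x2 : 0 <= L -> in_grid p (L + E) ->
  -E <= x1 <= E -> -E <= x2 <= E ->
  lambda_clap p L E s x1 = lambda_clap p L E s x2.
Proof.
  intros HL Hgrid Hx1 Hx2.
  rewrite !lambda_clap_RInt by (assumption || lra).
  rewrite (RInt_clap_kernel_window L s x1), (RInt_clap_kernel_window L s x2) by lra.
  reflexivity.
Qed.

Theorem mainTheorem9 (p : nat) (L E sigma eps : R) :
  (0 < p)%nat ->
  0 < L -> 0 < E -> 0 < sigma ->
  in_grid p L -> in_grid p E ->
  0 < eps -> sigma >= L / eps ->
  forall x1 x2 y : R,
    in_A p E x1 -> in_A p E x2 -> in_B p (L + E) y ->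
    f_clap p L E sigma x1 y <= exp eps * f_clap p L E sigma x2 y.
Proof.
  intros _ HL HE Hs HgL HgE Heps Hse x1 x2 y [_ Hx1] [_ Hx2] _.
  pose proof (in_grid_add _ _ _ HgL HgE) as Hgrid.
  assert (Hpos : 0 < lambda_clap p L E sigma x2)
    by (rewrite lambda_clap_RInt by (assumption || lra); apply RInt_clap_kernel_pos; lra).
  assert (Hrate : L / sigma <= eps).
  { apply Rle_div_l; [lra|].
    pose proof (proj1 (Rle_div_l L sigma eps Heps) (Rge_le _ _ Hse)); lra. }
  unfold f_clap.
  rewrite (lambda_clap_indep p L E sigma x1 x2), Rmult_div_assoc by (assumption || lra).
  apply Rmult_le_compat_r; [left; apply Rinv_0_lt_compat, Hpos|].
  eapply Rle_trans; [apply cell_mass_ratio; lra|].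
  apply Rmult_le_compat_r; [|apply exp_le_exp, Hrate].
  left; apply RInt_clap_kernel_pos; [lra | lra | pose proof (mesh_pos p); lra].
Qed.
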